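(* Let $G_{\mathrm{vc}}=(V_{\mathrm{vc}},E_{\mathrm{vc}})$ be a vertex-capacitated graph and $G_{\mathrm{ec}}$ the corresponding directed edge-capacitated graph. Then for any $u,v\in V_{\mathrm{vc}}$, $\mathrm{dist}_{G_{\mathrm{vc}}}(u,v)=\mathrm{dist}_{G_{\mathrm{ec}}}(u_{\mathrm{mid}},v_{\mathrm{mid}})=\mathrm{dist}_{G_{\mathrm{ec}}}(v_{\mathrm{mid}},u_{\mathrm{mid}})$.
   Context: A vertex-capacitated graph is a finite undirected graph with positive lengths $\ell$ and capacities $u$ on vertices and edges; the length of a path is the sum of the lengths of its vertices and edges, and $\mathrm{dist}_{G_{\mathrm{vc}}}$ is the resulting shortest-path distance. The corresponding directed graph $G_{\mathrm{ec}}$: for each $v\in V_{\mathrm{vc}}$, vertices $v_{\mathrm{in}},v_{\mathrm{mid}},v_{\mathrm{out}}$ and directed edges $(v_{\mathrm{in}},v_{\mathrm{mid}}),(v_{\mathrm{mid}},v_{\mathrm{out}}),(v_{\mathrm{in}},v_{\mathrm{out}})$, each of length $\ell(v)$ and capacity $u(v)$; for each $\{u,v\}\in E_{\mathrm{vc}}$, directed edges $(u_{\mathrm{out}},v_{\mathrm{in}})$ and $(v_{\mathrm{out}},u_{\mathrm{in}})$ of length $\ell(\{u,v\})$ and capacity $u(\{u,v\})$. $\mathrm{dist}_{G_{\mathrm{ec}}}$ is directed shortest-path distance (sum of edge lengths). *)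

From HB Require Import structures.
From mathcomp Require Import all_boot all_order all_algebra.
From mathcomp Require Import all_classical all_reals ereal.
Set Implicit Arguments. Unset Strict Implicit. Unset Printing Implicit Defensive.
Import Order.TTheory GRing.Theory Num.Theory.
Local Open Scope ring_scope.
Local Open Scope classical_set_scope.

(* A finite undirected (simple) vertex-capacitated graph: vertex set V (a finType),
   symmetric irreflexive adjacency, positive lengths and capacities on vertices
   and on edges (edge data given as symmetric functions on pairs of vertices,
   only meaningful on adjacent pairs). *)
Record vcgraph (R : realType) (V : finType) := VCGraph {
  vc_adj : rel V;
  vc_adj_sym : symmetric vc_adj;
  vc_adj_irr : irreflexive vc_adj;
  vc_lv : V -> R;
  vc_le : V -> V -> R;
  vc_uv : V -> R;
  vc_ue : V -> V -> R;
  vc_le_sym : forall x y, vc_le x y = vc_le y x;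
  vc_ue_sym : forall x y, vc_ue x y = vc_ue y x;
  vc_lv_pos : forall x, 0 < vc_lv x;
  vc_uv_pos : forall x, 0 < vc_uv x;
  vc_le_pos : forall x y, vc_adj x y -> 0 < vc_le x y;
  vc_ue_pos : forall x y, vc_adj x y -> 0 < vc_ue x y
}.

Definition vc_walk_len R V (G : vcgraph R V) (x : V) (s : seq V) : R :=
  (\sum_(y <- x :: s) vc_lv G y) + \sum_(e <- zip (x :: s) s) vc_le G e.1 e.2.

Definition dist_vc R V (G : vcgraph R V) (u v : V) : \bar R :=
  if u == v then 0%E else
  ereal_inf [set (vc_walk_len G u s)%:E | s in
               [set s : seq V | path (vc_adj G) u s /\ last u s = v]].

(* Copies of a vertex in G_ec. *)
Inductive role := r_in | r_mid | r_out.

Definition ec_vertex (V : finType) := (role * V)%type.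

Definition ec_arc R V (G : vcgraph R V) (x y : ec_vertex V) : bool :=
  match x, y with
  | (r_in, a), (r_mid, b) => a == b
  | (r_mid, a), (r_out, b) => a == b
  | (r_in, a), (r_out, b) => a == b
  | (r_out, a), (r_in, b) => vc_adj G a b
  | _, _ => false
  end.

(* Lengths of the directed edges of G_ec (meaningful on arcs only). *)
Definition ec_len R V (G : vcgraph R V) (x y : ec_vertex V) : R :=
  match x, y with
  | (r_in, a), (r_mid, _) => vc_lv G a
  | (r_mid, a), (r_out, _) => vc_lv G a
  | (r_in, a), (r_out, _) => vc_lv G a
  | (r_out, a), (r_in, b) => vc_le G a b
  | _, _ => 0
  end.

Definition ec_cap R V (G : vcgraph R V) (x y : ec_vertex V) : R :=
  match x, y with
  | (r_in, a), (r_mid, _) => vc_uv G a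
  | (r_mid, a), (r_out, _) => vc_uv G a
  | (r_in, a), (r_out, _) => vc_uv G a
  | (r_out, a), (r_in, b) => vc_ue G a b
  | _, _ => 0
  end.

Definition ec_walk_len R V (G : vcgraph R V) (x : ec_vertex V) (s : seq (ec_vertex V)) : R :=
  \sum_(e <- zip (x :: s) s) ec_len G e.1 e.2.

Definition is_ec_walk R V (G : vcgraph R V) (x : ec_vertex V) (s : seq (ec_vertex V)) : Prop :=
  let fix ok (a : ec_vertex V) (t : seq (ec_vertex V)) :=
    match t with [::] => True | b :: t' => ec_arc G a b /\ ok b t' end in ok x s.

Definition last_ec V (x : ec_vertex V) (s : seq (ec_vertex V)) : ec_vertex V :=
  foldl (fun _ b => b) x s.

Definition dist_ec R V (G : vcgraph R V) (x y : ec_vertex V) : \bar R :=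
  ereal_inf [set (ec_walk_len G x s)%:E | s in
               [set s | is_ec_walk G x s /\ last_ec x s = y]].

(* A walk in G_ec between mid-copies leaves u_mid through u_out, and every
   vertex w it later visits is entered at w_in and left through w_out, either
   directly or via w_mid; so it projects to a walk of G_vc in which every
   vertex is paid at least once and every edge exactly once, and the lift of a
   G_vc walk (using the arcs w_in -> w_out for the interior vertices) pays
   exactly the vertex and edge lengths of that walk.  Hence both infima agree,
   and symmetry follows from reversing walks in the undirected graph G_vc. *)

From mathcomp Require Import all_boot all_order all_algebra.
From mathcomp Require Import all_classical all_reals ereal.
From mathcomp Require Import lra.
Set Implicit Arguments. Unset Strict Implicit. Unset Printing Implicit Defensive.
Import Order.TTheory GRing.Theory Num.Theory.

Local Open Scope ring_scope.

Lemma zip_cons_belast (T : Type) (x : T) (s : seq T) :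
  zip (x :: s) s = zip (belast x s) s.
Proof. by elim: s x => [|y s IHs] x //=; rewrite IHs. Qed.

Lemma big_zip_swap (R : Type) (idx : R) (op : R -> R -> R)
    (T : Type) (F : T -> T -> R) (s t : seq T) :
  \big[op/idx]_(e <- zip s t) F e.1 e.2 = \big[op/idx]_(e <- zip t s) F e.2 e.1.
Proof. by elim: s t => [|x s IHs] [|y t] //=; rewrite ?big_nil // !big_cons IHs. Qed.

Lemma le_ereal_inf_dominated (R : realType) (A B : set \bar R) :
  (forall a, A a -> exists2 b, B b & (b <= a)%E) ->
  (ereal_inf B <= ereal_inf A)%E.
Proof.
move=> AB; apply: le_ereal_inf_tmp => a Aa; have [b Bb le_ba] := AB a Aa.
exact: ge_ereal_inf (ex_intro2 _ _ b Bb le_ba).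
Qed.

Section VertexCapacitatedDistances.

Variables (R : realType) (V : finType) (G : vcgraph R V).

Lemma vc_walk_len_nil x : vc_walk_len G x [::] = vc_lv G x.
Proof. by rewrite /vc_walk_len big_seq1 big_nil addr0. Qed.

Lemma vc_walk_len_cons x y s :
  vc_walk_len G x (y :: s) = vc_lv G x + vc_le G x y + vc_walk_len G y s.
Proof. rewrite /vc_walk_len /= !big_cons /=; lra. Qed.

Lemma vc_walk_len_rev x s : path (vc_adj G) x s ->
  [/\ path (vc_adj G) (last x s) (rev (belast x s)),
      last (last x s) (rev (belast x s)) = x &
      vc_walk_len G (last x s) (rev (belast x s)) = vc_walk_len G x s].
Proof.
move=> xs_path; set y := last x s; set b := belast x s.
have rev_lastI : y :: rev b = rcons (rev s) x by rewrite -rev_rcons -lastI rev_cons.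
have belast_rev : belast y (rev b) = rev s.
  by have := lastI y (rev b); rewrite rev_lastI => /esym /rcons_inj [].
split.
- rewrite rev_path (@eq_path _ _ (vc_adj G)) // => p q /=; exact: vc_adj_sym.
- by rewrite -[RHS](last_rcons x (rev s)) -rev_lastI.
- rewrite /vc_walk_len zip_cons_belast belast_rev rev_lastI -rev_cons big_rev.
  rewrite -rev_zip ?size_rev ?size_belast // big_rev big_zip_swap.
  rewrite zip_cons_belast -/b; congr (_ + _); apply: eq_bigr => e _.
  exact: vc_le_sym.
Qed.

Lemma dist_vc_sym u v : dist_vc G u v = dist_vc G v u.
Proof.
have dist_le u' v' : (dist_vc G v' u' <= dist_vc G u' v')%E.
  rewrite /dist_vc eq_sym; case: eqP => // _.
  apply: le_ereal_inf_dominated => _ [s [s_path s_last] <-].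
  have [r_path r_last r_len] := vc_walk_len_rev s_path.
  exists (vc_walk_len G v' (rev (belast u' s)))%:E; last by rewrite -s_last r_len.
  by exists (rev (belast u' s)) => //; rewrite -s_last.
by apply/eqP; rewrite eq_le !dist_le.
Qed.

Lemma ec_walk_len_nil (x : ec_vertex V) : ec_walk_len G x [::] = 0.
Proof. by rewrite /ec_walk_len big_nil. Qed.

Lemma ec_walk_len_cons (x y : ec_vertex V) s :
  ec_walk_len G x (y :: s) = ec_len G x y + ec_walk_len G y s.
Proof. by rewrite /ec_walk_len /= big_cons. Qed.

Lemma is_ec_walk_cons (x y : ec_vertex V) s :
  is_ec_walk G x (y :: s) = (ec_arc G x y /\ is_ec_walk G y s).
Proof. by []. Qed.

Lemma last_ec_cons (x y : ec_vertex V) s : last_ec x (y :: s) = last_ec y s.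
Proof. by []. Qed.

Lemma ec_len_gt0 (x y : ec_vertex V) : ec_arc G x y -> 0 < ec_len G x y.
Proof.
case: x => [[] a]; case: y => [[] b] //= xy;
  by [apply: vc_lv_pos | apply: vc_le_pos].
Qed.

Lemma ec_walk_len_ge0 x t : is_ec_walk G x t -> 0 <= ec_walk_len G x t.
Proof.
elim: t x => [|y t IHt] x; first by rewrite ec_walk_len_nil.
rewrite is_ec_walk_cons ec_walk_len_cons => -[xy t_walk].
by rewrite addr_ge0 ?IHt // ltW ?ec_len_gt0.
Qed.

(* A walk starting at a mid- or out-copy no longer pays the length of its
   first vertex, whence the offset. *)
Lemma ec_walk_project v x t :
  is_ec_walk G x t -> last_ec x t = (r_mid, v) ->
  exists s, [/\ path (vc_adj G) x.2 s, last x.2 s = v &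
    vc_walk_len G x.2 s
      <= (if x.1 is r_in then 0 else vc_lv G x.2) + ec_walk_len G x t].
Proof.
elim: t x => [|y t IHt] [r a].
  by move=> _ [-> ->]; exists [::]; rewrite vc_walk_len_nil ec_walk_len_nil addr0.
rewrite is_ec_walk_cons ec_walk_len_cons last_ec_cons => -[xy t_walk t_last].
have [s [s_path s_last s_len]] := IHt y t_walk t_last.
have la_gt0 := vc_lv_pos G a.
clear IHt t_walk t_last; move: xy s_path s_last s_len.
case: r; case: y => [[] b] //= xy s_path s_last s_len; last first.
  exists (b :: s); split => //=; first by rewrite xy.
  by rewrite vc_walk_len_cons; lra.
all: by move: xy s_path s_last s_len => /eqP <- *; exists s; split => //; lra.
Qed.

Fixpoint ec_lift (s : seq V) : seq (ec_vertex V) :=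
  if s is y :: s' then
    (r_in, y) :: (if s' is [::] then [:: (r_mid, y)] else (r_out, y) :: ec_lift s')
  else [::].

Lemma ec_lift_walk x s : s != [::] -> path (vc_adj G) x s ->
  [/\ is_ec_walk G (r_out, x) (ec_lift s),
      last_ec (r_out, x) (ec_lift s) = (r_mid, last x s) &
      vc_lv G x + ec_walk_len G (r_out, x) (ec_lift s) = vc_walk_len G x s].
Proof.
elim: s x => [|y s IHs] x // _ /= /andP[xy s_path].
case: s IHs s_path => [|z s] IHs s_path.
  rewrite !is_ec_walk_cons /= xy eqxx !ec_walk_len_cons ec_walk_len_nil.
  by rewrite vc_walk_len_cons vc_walk_len_nil /=; split => //; lra.
have [walk walk_last walk_len] := IHs y isT s_path.
split.
- by rewrite !is_ec_walk_cons /= xy eqxx.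
- by rewrite !last_ec_cons -walk_last.
- rewrite (ec_walk_len_cons (r_out, x)) (ec_walk_len_cons (r_in, y)).
  by rewrite vc_walk_len_cons -walk_len /=; lra.
Qed.

Lemma dist_ec_refl u : dist_ec G (r_mid, u) (r_mid, u) = 0%E.
Proof.
apply/eqP; rewrite eq_le; apply/andP; split.
  by apply: ge_ereal_inf; exists 0%E => //; exists [::]; rewrite ?ec_walk_len_nil.
apply: le_ereal_inf_tmp => _ [t [t_walk _] <-].
by rewrite lee_fin ec_walk_len_ge0.
Qed.

Lemma dist_vc_le_ec u v : (dist_vc G u v <= dist_ec G (r_mid, u) (r_mid, v))%E.
Proof.
rewrite /dist_vc; case: eqP => [<-|/eqP uv]; first by rewrite dist_ec_refl.
apply: le_ereal_inf_dominated => _ [[|y t] [t_walk t_last] <-].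
  by case: t_last => /eqP; rewrite (negbTE uv).
move: t_walk; rewrite is_ec_walk_cons last_ec_cons in t_last * => -[uy t_walk].
have y_out : y = (r_out, u) by clear t_walk t_last; case: y uy => [[] b] //= /eqP <-.
subst y.
have [s [s_path s_last s_len]] := ec_walk_project t_walk t_last.
exists (vc_walk_len G u s)%:E; first by exists s.
by rewrite lee_fin ec_walk_len_cons.
Qed.

Lemma dist_ec_le_vc u v : (dist_ec G (r_mid, u) (r_mid, v) <= dist_vc G u v)%E.
Proof.
rewrite /dist_vc; case: eqP => [<-|/eqP uv]; first by rewrite dist_ec_refl.
apply: le_ereal_inf_dominated => _ [s [s_path s_last] <-].
have s_ne_nil : s != [::] by case: s s_path s_last uv => //= _ ->; rewrite eqxx.
have [walk walk_last walk_len] := ec_lift_walk s_ne_nil s_path.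
exists (ec_walk_len G (r_mid, u) ((r_out, u) :: ec_lift s))%:E.
  by exists ((r_out, u) :: ec_lift s) => //; rewrite /= eqxx walk_last s_last.
by rewrite lee_fin ec_walk_len_cons /= walk_len.
Qed.

Lemma dist_vc_ec u v : dist_vc G u v = dist_ec G (r_mid, u) (r_mid, v).
Proof. by apply/eqP; rewrite eq_le dist_vc_le_ec dist_ec_le_vc. Qed.

End VertexCapacitatedDistances.

Theorem lemma4p6 (R : realType) (V : finType) (G : vcgraph R V) (u v : V) :
  dist_vc G u v = dist_ec G (r_mid, u) (r_mid, v) /\
  dist_ec G (r_mid, u) (r_mid, v) = dist_ec G (r_mid, v) (r_mid, u).
Proof. by rewrite -!dist_vc_ec dist_vc_sym. Qed.
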